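(* In the configuration described in the context, let $R_1=\delta r_1^2$ and $R_2=\delta r_2^2$ where $\delta,r_1,r_2,r_3$ are positive integers with $\gcd(r_1,r_2)=1$, $r_1>r_2$ and $r_1^2+r_2^2=r_3^2$. Then all of the lengths $T_1T_2$, $C_1M$, $C_2M$, $T_1I$, $T_2I$, $C_1M_1$, $C_2M_2$, $M_1M$, $M_2M$, $IM$, $C_2K$, $T_2K$, $C_1K$, $T_1K$ are integers if and only if $r_3(r_1^2-r_2^2)$ divides $\delta$, i.e. $\delta = t\,r_3(r_1^2-r_2^2)$ for a positive integer $t$, so that $R_1 = t r_3 r_1^2(r_1^2-r_2^2)$ and $R_2 = t r_3 r_2^2 (r_1^2-r_2^2)$. In that case $T_1T_2 = 2tr_1r_2r_3(r_1^2-r_2^2)$, $C_1M = tr_1r_3^2(r_1^2-r_2^2)$, $C_2M = tr_2r_3^2(r_1^2-r_2^2)$, $T_1I = 2tr_2r_1^2(r_1^2-r_2^2)$, $T_2I = 2tr_1r_2^2(r_1^2-r_2^2)$, $C_1M_1 = tr_1^3(r_1^2-r_2^2)$, $C_2M_2 = tr_2^3(r_1^2-r_2^2)$, $M_1M = tr_1r_2^2(r_1^2-r_2^2)$, $M_2M = tr_2r_1^2(r_1^2-r_2^2)$, $IM=T_1M=T_2M = tr_1r_2r_3(r_1^2-r_2^2)$, $C_2K = tr_2^2r_3^3$, $T_2K = 2tr_1r_3r_2^3$, $C_1K = tr_1^2r_3^3$, $T_1K = 2tr_2r_3r_1^3$; consequently the right triangles $C_1T_1M_1$, $C_1IM_1$,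 $C_2T_2M_2$, $C_2IM_2$, $T_1M_1M$, $MM_1I$, $IM_2M$, $MM_2T_2$, $C_1T_1M$, $C_1IM$, $C_2T_2M$, $C_2IM$, $C_1MC_2$, $T_1IT_2$, $C_2T_2K$, $C_1T_1K$ all have integer side lengths.
   Context: Configuration: two circles in the plane with centers $C_1,C_2$ and radii $R_1>R_2>0$, externally tangent at the point $I$ (so $I$ lies on segment $C_1C_2$ and $C_1C_2=R_1+R_2$). Let a common external tangent line touch the first circle at $T_1$ and the second circle at $T_2$ (both circles on the same side of line $T_1T_2$). Let $M$ be the midpoint of segment $T_1T_2$; equivalently, $M$ is the point where the common tangent line at $I$ (the line through $I$ perpendicular to $C_1C_2$) meets $T_1T_2$. Let $M_1$ be the midpoint of segment $T_1I$ (which is the intersection point of segment $C_1M$ with $T_1I$, the foot of the perpendicular from $C_1$ to $T_1I$), and $M_2$ the midpoint of segment $T_2I$ (the intersection of $C_2M$ with $T_2I$). Since $R_1>R_2$, the lines $T_1T_2$ and $C_1C_2$ meet at a point $K$, lying beyond $C_2$ on ray $C_1C_2$ and beyond $T_2$ on ray $T_1T_2$. For points $X,Y$, $XY$ denotes the length of segment $\overline{XY}$. *)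

From Stdlib Require Import Reals ZArith.
Open Scope R_scope.

Definition point : Type := (R * R)%type.

Definition distp (P Q : point) : R :=
  sqrt ((fst P - fst Q) ^ 2 + (snd P - snd Q) ^ 2).

Definition midpoint (P Q : point) : point :=
  ((fst P + fst Q) / 2, (snd P + snd Q) / 2).

Definition dotv (P Q R' S : point) : R :=
  (fst Q - fst P) * (fst S - fst R') + (snd Q - snd P) * (snd S - snd R').

Definition crossv (P Q R' : point) : R :=
  (fst Q - fst P) * (snd R' - snd P) - (snd Q - snd P) * (fst R' - fst P).

Definition on_line (X P Q : point) : Prop :=
  exists s : R, X = (fst P + s * (fst Q - fst P), snd P + s * (snd Q - snd P)).

Definition is_int (x : R) : Prop := exists z : Z, x = IZR z.

Definition config (C1 C2 : point) (R1 R2 : R)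
  (I T1 T2 M M1 M2 K : point) : Prop :=
  0 < R2 /\ R2 < R1 /\
  (* externally tangent circles, tangent at I *)
  distp C1 C2 = R1 + R2 /\ distp C1 I = R1 /\ distp I C2 = R2 /\
  distp C1 T1 = R1 /\ distp C2 T2 = R2 /\
  (* line T1T2 tangent to both circles *)
  dotv T1 T2 C1 T1 = 0 /\ dotv T1 T2 C2 T2 = 0 /\
  (* both circles strictly on the same side of line T1T2 (forces T1 <> T2) *)
  0 < crossv T1 T2 C1 * crossv T1 T2 C2 /\
  M = midpoint T1 T2 /\ M1 = midpoint T1 I /\ M2 = midpoint T2 I /\
  on_line K T1 T2 /\ on_line K C1 C2.

From Stdlib Require Import Reals ZArith Znumtheory Lra Lia Psatz.
Open Scope R_scope.

(* Put the configuration in the orthogonal frame (T1; T2 - T1, C1 - T1).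
   The two tangent radii are perpendicular to T1T2 and on the same side, hence
   parallel: C2 - T2 = (R2/R1)(C1 - T1); the tangency I divides C1C2 in the ratio
   R1 : R2 (equality case of the triangle inequality); |T1T2|^2 = 4 R1 R2; and K,
   on both lines, sits at T1 + R1/(R1 - R2) (T2 - T1).  Pythagoras in the frame
   then gives every length as the square root of a rational function of R1, R2
   (config_lengths).

   With R_i = delta r_i^2 and r1^2 + r2^2 = r3^2 these lengths become
   rational in delta, r1, r2, r3.  If delta = t r3 (r1^2 - r2^2) they are the
   announced integers (divisible_case_lengths).  Conversely, integrality of
   T1I = 2 delta r1^2 r2 / r3 and of C2K = delta r2^2 r3^2 / (r1^2 - r2^2) already
   forces r3 (r1^2 - r2^2) | delta, by coprimality facts for primitive triples
   (primitive_triple_divisibility). *)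

Section PrimitiveTriple.
Local Open Scope Z_scope.

Lemma rel_prime_transfer a b x y :
  rel_prime x y ->
  (forall d, (d | a) -> (d | b) -> (d | x)) ->
  (forall d, (d | a) -> (d | b) -> (d | y)) ->
  rel_prime a b.
Proof.
  intros [_ _ Hxy] Hx Hy.
  constructor; [apply Z.divide_1_l | apply Z.divide_1_l | auto].
Qed.

Variables r1 r2 r3 : Z.
Hypothesis coprime12 : Z.gcd r1 r2 = 1.
Hypothesis pythagoras : r1 ^ 2 + r2 ^ 2 = r3 ^ 2.

Let rp12 : rel_prime r1 r2 := proj1 (Zgcd_1_rel_prime r1 r2) coprime12.

(* The hypotenuse of a primitive Pythagorean triple is odd: the legs are not
   both even, and two odd legs would give r3^2 = 2 mod 4. *)
Lemma hypotenuse_odd : ~ (2 | r3).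
Proof.
  intros [m ->].
  destruct (Z.Even_or_Odd r1) as [[k Hk]|[k Hk]];
  destruct (Z.Even_or_Odd r2) as [[l Hl]|[l Hl]]; subst r1 r2.
  - destruct rp12 as [_ _ H].
    assert (D : (2 | 1)) by (apply H; [exists k | exists l]; ring).
    apply Z.divide_pos_le in D; lia.
  - ring_simplify in pythagoras; lia.
  - ring_simplify in pythagoras; lia.
  - ring_simplify in pythagoras; lia.
Qed.

Lemma hypotenuse_coprime_2 : rel_prime r3 2.
Proof. apply rel_prime_sym, prime_rel_prime; auto using prime_2, hypotenuse_odd. Qed.

Lemma hypotenuse_coprime_leg1 : rel_prime r3 r1.
Proof.
  apply (rel_prime_transfer _ _ r1 (r2 * r2)); auto using rel_prime_mult.
  intros d d3 d1. replace (r2 * r2) with (r3 * r3 - r1 * r1) by lia.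
  apply Z.divide_sub_r; apply Z.divide_mul_l; auto.
Qed.

Lemma hypotenuse_coprime_leg2 : rel_prime r3 r2.
Proof.
  apply (rel_prime_transfer _ _ r2 (r1 * r1));
    auto using rel_prime_mult, rel_prime_sym.
  intros d d3 d2. replace (r1 * r1) with (r3 * r3 - r2 * r2) by lia.
  apply Z.divide_sub_r; apply Z.divide_mul_l; auto.
Qed.

(* The difference of the squared legs is prime to the second leg and to the
   hypotenuse (the latter because the hypotenuse is odd). *)
Lemma leg_difference_coprime_leg2 : rel_prime (r1 ^ 2 - r2 ^ 2) r2.
Proof.
  apply (rel_prime_transfer _ _ (r1 * r1) r2);
    auto using rel_prime_mult, rel_prime_sym.
  intros d dD d2. replace (r1 * r1) with ((r1 ^ 2 - r2 ^ 2) + r2 * r2) by lia.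
  apply Z.divide_add_r; [auto | apply Z.divide_mul_l; auto].
Qed.

Lemma leg_difference_coprime_hypotenuse : rel_prime (r1 ^ 2 - r2 ^ 2) r3.
Proof.
  apply (rel_prime_transfer _ _ r3 (2 * (r2 * r2)));
    auto using rel_prime_mult, hypotenuse_coprime_2, hypotenuse_coprime_leg2.
  intros d dD d3. replace (2 * (r2 * r2)) with (r3 * r3 - (r1 ^ 2 - r2 ^ 2)) by lia.
  apply Z.divide_sub_r; [apply Z.divide_mul_l|]; auto.
Qed.

(* The arithmetic heart of the theorem: the two divisibilities forced by the
   integrality of T1I and C2K already force r3 (r1^2 - r2^2) | delta. *)
Lemma primitive_triple_divisibility delta :
  (r3 | 2 * r1 ^ 2 * r2 * delta) ->
  (r1 ^ 2 - r2 ^ 2 | r2 ^ 2 * r3 ^ 2 * delta) ->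
  (r3 * (r1 ^ 2 - r2 ^ 2) | delta).
Proof.
  intros div3 divD.
  replace (2 * r1 ^ 2 * r2 * delta) with ((2 * (r1 * r1 * r2)) * delta) in div3 by ring.
  apply Gauss in div3;
    [| auto 6 using rel_prime_mult, hypotenuse_coprime_2, hypotenuse_coprime_leg1,
         hypotenuse_coprime_leg2].
  destruct div3 as [k ->].
  replace (r2 ^ 2 * r3 ^ 2 * (k * r3)) with ((r2 * r2 * (r3 * r3 * r3)) * k) in divD by ring.
  apply Gauss in divD;
    [| auto 10 using rel_prime_mult, leg_difference_coprime_leg2,
         leg_difference_coprime_hypotenuse].
  destruct divD as [m ->]. exists m. ring.
Qed.

End PrimitiveTriple.

Lemma cauchy_schwarz_equality px py qx qy a b :
  px ^ 2 + py ^ 2 = a ^ 2 -> qx ^ 2 + qy ^ 2 = b ^ 2 -> px * qx + py * qy = a * b ->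
  b * px = a * qx /\ b * py = a * qy.
Proof.
  intros Hp Hq Hpq.
  assert (E : (b * px - a * qx) ^ 2 + (b * py - a * qy) ^ 2 = 0).
  { replace ((b * px - a * qx) ^ 2 + (b * py - a * qy) ^ 2) with
      (b ^ 2 * (px ^ 2 + py ^ 2) - 2 * a * b * (px * qx + py * qy)
       + a ^ 2 * (qx ^ 2 + qy ^ 2)) by ring.
    rewrite Hp, Hq, Hpq. ring. }
  rewrite <- !Rsqr_pow2 in E. apply Rplus_sqr_eq_0 in E. lra.
Qed.

Lemma triangle_equality px py qx qy a b :
  px ^ 2 + py ^ 2 = a ^ 2 -> qx ^ 2 + qy ^ 2 = b ^ 2 ->
  (px + qx) ^ 2 + (py + qy) ^ 2 = (a + b) ^ 2 ->
  b * px = a * qx /\ b * py = a * qy.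
Proof.
  intros Hp Hq Hpq. apply cauchy_schwarz_equality; nra.
Qed.

(* This is why the two tangent radii C1T1 and C2T2 are parallel. *)
Lemma parallel_radii dx dy wx wy vx vy R1 R2 :
  0 < R1 -> 0 < R2 ->
  dx * wx + dy * wy = 0 -> dx * vx + dy * vy = 0 ->
  wx ^ 2 + wy ^ 2 = R1 ^ 2 -> vx ^ 2 + vy ^ 2 = R2 ^ 2 ->
  0 < (dx * wy - dy * wx) * (dx * vy - dy * vx) ->
  R1 * vx = R2 * wx /\ R1 * vy = R2 * wy.
Proof.
  intros HR1 HR2 Hdw Hdv Hw Hv Hside.
  set (N := dx ^ 2 + dy ^ 2).
  (* Lagrange's identities for the cross products with d *)
  assert (Cw : (dx * wy - dy * wx) ^ 2 = N * R1 ^ 2).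
  { replace ((dx * wy - dy * wx) ^ 2)
      with (N * (wx ^ 2 + wy ^ 2) - (dx * wx + dy * wy) ^ 2) by (unfold N; ring).
    rewrite Hw, Hdw. ring. }
  assert (Cv : (dx * vy - dy * vx) ^ 2 = N * R2 ^ 2).
  { replace ((dx * vy - dy * vx) ^ 2)
      with (N * (vx ^ 2 + vy ^ 2) - (dx * vx + dy * vy) ^ 2) by (unfold N; ring).
    rewrite Hv, Hdv. ring. }
  assert (Cwv : (dx * wy - dy * wx) * (dx * vy - dy * vx) = N * (wx * vx + wy * vy)).
  { replace ((dx * wy - dy * wx) * (dx * vy - dy * vx))
      with (N * (wx * vx + wy * vy) - (dx * wx + dy * wy) * (dx * vx + dy * vy))
      by (unfold N; ring).
    rewrite Hdw. ring. }
  assert (HN : 0 < N).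
  { assert (0 <= N) by (unfold N; nra).
    destruct (Req_dec N 0) as [E | E]; [rewrite E in Cwv; lra | lra]. }
  assert (Hcross : (dx * wy - dy * wx) * (dx * vy - dy * vx) = N * (R1 * R2)).
  { apply Rsqr_inj; unfold Rsqr;
      [lra | apply Rmult_le_pos; [lra | nra] |].
    transitivity ((dx * wy - dy * wx) ^ 2 * (dx * vy - dy * vx) ^ 2); [ring |].
    rewrite Cw, Cv. ring. }
  assert (Hwv : wx * vx + wy * vy = R1 * R2) by nra.
  destruct (cauchy_schwarz_equality wx wy vx vy R1 R2) as [Ex Ey]; auto; lra.
Qed.

Lemma tangent_length_sq dx dy wx wy vx vy R1 R2 :
  0 < R1 -> R1 * vx = R2 * wx -> R1 * vy = R2 * wy ->
  dx * wx + dy * wy = 0 -> wx ^ 2 + wy ^ 2 = R1 ^ 2 ->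
  (dx + vx - wx) ^ 2 + (dy + vy - wy) ^ 2 = (R1 + R2) ^ 2 ->
  dx ^ 2 + dy ^ 2 = 4 * R1 * R2.
Proof.
  intros HR1 Ex Ey Hdw Hw Hc.
  assert (E : R1 ^ 2 * (dx ^ 2 + dy ^ 2) = R1 ^ 2 * (4 * R1 * R2)).
  { transitivity (R1 ^ 2 * ((dx + vx - wx) ^ 2 + (dy + vy - wy) ^ 2)
                  - 2 * R1 * (R2 - R1) * (dx * wx + dy * wy)
                  - (R2 - R1) ^ 2 * (wx ^ 2 + wy ^ 2)).
    - replace (R1 ^ 2 * ((dx + vx - wx) ^ 2 + (dy + vy - wy) ^ 2)) with
        ((R1 * dx + R1 * vx - R1 * wx) ^ 2 + (R1 * dy + R1 * vy - R1 * wy) ^ 2) by ring.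
      rewrite Ex, Ey. ring.
    - rewrite Hc, Hdw, Hw. ring. }
  apply Rmult_eq_reg_l in E; [exact E | nra].
Qed.

Lemma orthogonal_relation_trivial dx dy wx wy a b :
  dx * wx + dy * wy = 0 -> 0 < dx ^ 2 + dy ^ 2 -> 0 < wx ^ 2 + wy ^ 2 ->
  a * dx = b * wx -> a * dy = b * wy -> a = 0 /\ b = 0.
Proof.
  intros Hdw Hd Hw Ex Ey.
  assert (Ea : a * (dx ^ 2 + dy ^ 2) = b * (dx * wx + dy * wy)).
  { transitivity (dx * (a * dx) + dy * (a * dy)); [ring |]. rewrite Ex, Ey. ring. }
  assert (Eb : b * (wx ^ 2 + wy ^ 2) = a * (dx * wx + dy * wy)).
  { transitivity (wx * (b * wx) + wy * (b * wy)); [ring |]. rewrite <- Ex, <- Ey. ring. }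
  rewrite Hdw, Rmult_0_r in Ea, Eb. split; nra.
Qed.

Lemma distp_sq P Q r :
  distp P Q = r -> (fst P - fst Q) ^ 2 + (snd P - snd Q) ^ 2 = r ^ 2.
Proof.
  unfold distp. intros <-. symmetry. apply pow2_sqrt.
  apply Rplus_le_le_0_compat; apply pow2_ge_0.
Qed.

Lemma distp_sym P Q : distp P Q = distp Q P.
Proof. unfold distp. f_equal. ring. Qed.

Lemma eq_div_of_mul x y c : c <> 0 -> c * x = y -> x = y / c.
Proof. intros Hc <-. field. exact Hc. Qed.

Definition frame_point (O u v : point) (a b : R) : point :=
  (fst O + a * fst u + b * fst v, snd O + a * snd u + b * snd v).

Lemma frame_point_dist O u v a b a' b' :
  fst u * fst v + snd u * snd v = 0 ->
  distp (frame_point O u v a b) (frame_point O u v a' b') =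
  sqrt ((a - a') ^ 2 * (fst u ^ 2 + snd u ^ 2) + (b - b') ^ 2 * (fst v ^ 2 + snd v ^ 2)).
Proof.
  intro Huv. unfold distp, frame_point; cbn [fst snd]. f_equal.
  transitivity ((a - a') ^ 2 * (fst u ^ 2 + snd u ^ 2) + (b - b') ^ 2 * (fst v ^ 2 + snd v ^ 2)
                + 2 * (a - a') * (b - b') * (fst u * fst v + snd u * snd v)); [ring |].
  rewrite Huv. ring.
Qed.

Lemma config_frame C1 C2 R1 R2 I T1 T2 M M1 M2 K :
  config C1 C2 R1 R2 I T1 T2 M M1 M2 K ->
  exists O u v : point,
    fst u * fst v + snd u * snd v = 0 /\
    fst u ^ 2 + snd u ^ 2 = 4 * R1 * R2 /\ fst v ^ 2 + snd v ^ 2 = R1 ^ 2 /\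
    T1 = frame_point O u v 0 0 /\ T2 = frame_point O u v 1 0 /\
    C1 = frame_point O u v 0 1 /\ C2 = frame_point O u v 1 (R2 / R1) /\
    I = frame_point O u v (R1 / (R1 + R2)) (2 * R2 / (R1 + R2)) /\
    M = frame_point O u v (1 / 2) 0 /\
    M1 = frame_point O u v (R1 / (2 * (R1 + R2))) (R2 / (R1 + R2)) /\
    M2 = frame_point O u v ((2 * R1 + R2) / (2 * (R1 + R2))) (R2 / (R1 + R2)) /\
    K = frame_point O u v (R1 / (R1 - R2)) 0.
Proof.
  intros (HR2 & HR12 & dC1C2 & dC1I & dIC2 & dC1T1 & dC2T2 & tan1 & tan2 & side
          & -> & -> & -> & [s HK1] & [s' HK2]).
  apply distp_sq in dC1C2, dC1I, dIC2, dC1T1, dC2T2.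
  destruct T1 as [x1 y1], T2 as [x2 y2], C1 as [p q], C2 as [p' q'], I as [ix iy].
  unfold dotv, crossv in *; cbn [fst snd] in *.
  destruct (parallel_radii (x2 - x1) (y2 - y1) (p - x1) (q - y1) (p' - x2) (q' - y2) R1 R2)
    as [Px Py]; [lra .. |].
  assert (Ep' : p' = x2 + R2 / R1 * (p - x1)).
  { replace (R2 / R1 * (p - x1)) with (R2 * (p - x1) / R1) by (field; lra).
    rewrite <- Px. field. lra. }
  assert (Eq' : q' = y2 + R2 / R1 * (q - y1)).
  { replace (R2 / R1 * (q - y1)) with (R2 * (q - y1) / R1) by (field; lra).
    rewrite <- Py. field. lra. }
  assert (tangent : (x2 - x1) ^ 2 + (y2 - y1) ^ 2 = 4 * R1 * R2)
    by (apply (tangent_length_sq _ _ (p - x1) (q - y1) (p' - x2) (q' - y2)); lra).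
  destruct (triangle_equality (ix - p) (iy - q) (p' - ix) (q' - iy) R1 R2)
    as [Ix Iy]; [lra | lra | lra |].
  assert (Eix : ix = (R2 * p + R1 * p') / (R1 + R2)) by (apply eq_div_of_mul; lra).
  assert (Eiy : iy = (R2 * q + R1 * q') / (R1 + R2)) by (apply eq_div_of_mul; lra).
  subst p' q' ix iy.
  rewrite HK1 in HK2. injection HK2 as Kx Ky.
  destruct (orthogonal_relation_trivial (x2 - x1) (y2 - y1) (p - x1) (q - y1)
              (s - s') (1 + s' * (R2 / R1 - 1))) as [Es Es'];
    [lra | nra | nra | lra | lra |].
  assert (Hs : s = R1 / (R1 - R2)).
  { replace s with s' by lra. apply eq_div_of_mul; [lra |].
    assert (E : R1 * (1 + s' * (R2 / R1 - 1)) = R1 - (R1 - R2) * s') by (field; lra).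
    rewrite Es', Rmult_0_r in E. lra. }
  subst K s.
  exists (x1, y1), (x2 - x1, y2 - y1), (p - x1, q - y1).
  unfold frame_point, midpoint; cbn [fst snd].
  repeat split; try lra; f_equal; field; lra.
Qed.

Lemma config_lengths C1 C2 R1 R2 I T1 T2 M M1 M2 K :
  config C1 C2 R1 R2 I T1 T2 M M1 M2 K ->
  distp T1 T2 = sqrt (4 * R1 * R2) /\
  distp C1 M = sqrt (R1 * (R1 + R2)) /\
  distp C2 M = sqrt (R2 * (R1 + R2)) /\
  distp T1 I = sqrt (4 * R1 ^ 2 * R2 / (R1 + R2)) /\
  distp T2 I = sqrt (4 * R1 * R2 ^ 2 / (R1 + R2)) /\
  distp C1 M1 = sqrt (R1 ^ 3 / (R1 + R2)) /\
  distp C2 M2 = sqrt (R2 ^ 3 / (R1 + R2)) /\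
  distp M1 M = sqrt (R1 * R2 ^ 2 / (R1 + R2)) /\
  distp M2 M = sqrt (R1 ^ 2 * R2 / (R1 + R2)) /\
  distp I M = sqrt (R1 * R2) /\
  distp T1 M = sqrt (R1 * R2) /\
  distp T2 M = sqrt (R1 * R2) /\
  distp C2 K = sqrt (R2 ^ 2 * (R1 + R2) ^ 2 / (R1 - R2) ^ 2) /\
  distp T2 K = sqrt (4 * R1 * R2 ^ 3 / (R1 - R2) ^ 2) /\
  distp C1 K = sqrt (R1 ^ 2 * (R1 + R2) ^ 2 / (R1 - R2) ^ 2) /\
  distp T1 K = sqrt (4 * R1 ^ 3 * R2 / (R1 - R2) ^ 2) /\
  distp T1 M1 = sqrt (R1 ^ 2 * R2 / (R1 + R2)) /\
  distp I M1 = sqrt (R1 ^ 2 * R2 / (R1 + R2)) /\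
  distp T2 M2 = sqrt (R1 * R2 ^ 2 / (R1 + R2)) /\
  distp I M2 = sqrt (R1 * R2 ^ 2 / (R1 + R2)).
Proof.
  intro Hc. pose proof Hc as (HR2 & HR12 & _).
  destruct (config_frame _ _ _ _ _ _ _ _ _ _ _ Hc) as
    (O & u & v & Huv & Hu & Hv & -> & -> & -> & -> & -> & -> & -> & -> & ->).
  rewrite !frame_point_dist, Hu, Hv by exact Huv.
  repeat split; f_equal; field; lra.
Qed.

Lemma IZR_sq (z : Z) : IZR (z ^ 2) = IZR z ^ 2.
Proof. exact (eq_sym (pow_IZR z 2)). Qed.

Lemma IZR_cube (z : Z) : IZR (z ^ 3) = IZR z ^ 3.
Proof. exact (eq_sym (pow_IZR z 3)). Qed.

Ltac push_IZR := rewrite ?mult_IZR, ?minus_IZR, ?plus_IZR, ?IZR_sq, ?IZR_cube in *.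

Lemma sqrt_square e v : 0 <= v -> e = v ^ 2 -> sqrt e = v.
Proof. intros Hv ->. exact (sqrt_pow2 v Hv). Qed.

Lemma divisible_case_lengths (t r1 r2 r3 : Z) C1 C2 I T1 T2 M M1 M2 K :
  (0 < t)%Z -> (0 < r2)%Z -> (r2 < r1)%Z -> (0 < r3)%Z ->
  (r1 ^ 2 + r2 ^ 2 = r3 ^ 2)%Z ->
  config C1 C2 (IZR (t * r3 * (r1 ^ 2 - r2 ^ 2) * r1 ^ 2))
    (IZR (t * r3 * (r1 ^ 2 - r2 ^ 2) * r2 ^ 2)) I T1 T2 M M1 M2 K ->
  distp T1 T2 = IZR (2 * t * r1 * r2 * r3 * (r1 ^ 2 - r2 ^ 2)) /\
  distp C1 M = IZR (t * r1 * r3 ^ 2 * (r1 ^ 2 - r2 ^ 2)) /\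
  distp C2 M = IZR (t * r2 * r3 ^ 2 * (r1 ^ 2 - r2 ^ 2)) /\
  distp T1 I = IZR (2 * t * r2 * r1 ^ 2 * (r1 ^ 2 - r2 ^ 2)) /\
  distp T2 I = IZR (2 * t * r1 * r2 ^ 2 * (r1 ^ 2 - r2 ^ 2)) /\
  distp C1 M1 = IZR (t * r1 ^ 3 * (r1 ^ 2 - r2 ^ 2)) /\
  distp C2 M2 = IZR (t * r2 ^ 3 * (r1 ^ 2 - r2 ^ 2)) /\
  distp M1 M = IZR (t * r1 * r2 ^ 2 * (r1 ^ 2 - r2 ^ 2)) /\
  distp M2 M = IZR (t * r2 * r1 ^ 2 * (r1 ^ 2 - r2 ^ 2)) /\
  distp I M = IZR (t * r1 * r2 * r3 * (r1 ^ 2 - r2 ^ 2)) /\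
  distp T1 M = IZR (t * r1 * r2 * r3 * (r1 ^ 2 - r2 ^ 2)) /\
  distp T2 M = IZR (t * r1 * r2 * r3 * (r1 ^ 2 - r2 ^ 2)) /\
  distp C2 K = IZR (t * r2 ^ 2 * r3 ^ 3) /\
  distp T2 K = IZR (2 * t * r1 * r3 * r2 ^ 3) /\
  distp C1 K = IZR (t * r1 ^ 2 * r3 ^ 3) /\
  distp T1 K = IZR (2 * t * r2 * r3 * r1 ^ 3) /\
  distp T1 M1 = IZR (t * r2 * r1 ^ 2 * (r1 ^ 2 - r2 ^ 2)) /\
  distp I M1 = IZR (t * r2 * r1 ^ 2 * (r1 ^ 2 - r2 ^ 2)) /\
  distp T2 M2 = IZR (t * r1 * r2 ^ 2 * (r1 ^ 2 - r2 ^ 2)) /\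
  distp I M2 = IZR (t * r1 * r2 ^ 2 * (r1 ^ 2 - r2 ^ 2)).
Proof.
  intros Ht H2 H21 H3 Hpy Hc.
  apply config_lengths in Hc.
  apply (f_equal IZR) in Hpy.
  apply IZR_lt in Ht, H2, H21, H3.
  push_IZR.
  set (a := IZR r1) in *. set (b := IZR r2) in *. set (c := IZR r3) in *.
  set (s := IZR t) in *.
  assert (HD : 0 < a ^ 2 - b ^ 2) by nra.
  replace (s * c * (a ^ 2 - b ^ 2) * a ^ 2 + s * c * (a ^ 2 - b ^ 2) * b ^ 2)
    with (s * c * (a ^ 2 - b ^ 2) * c ^ 2) in Hc by (rewrite <- Hpy; ring).
  replace (s * c * (a ^ 2 - b ^ 2) * a ^ 2 - s * c * (a ^ 2 - b ^ 2) * b ^ 2)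
    with (s * c * (a ^ 2 - b ^ 2) ^ 2) in Hc by ring.
  decompose [and] Hc. clear Hc.
  repeat split;
    match goal with E : distp ?P ?Q = _ |- distp ?P ?Q = _ => rewrite E end;
    apply sqrt_square;
    solve [repeat (apply Rmult_le_pos || apply pow_le); lra
          | field; repeat split; lra].
Qed.

Lemma integral_lengths_force_divisibility (delta r1 r2 r3 : Z) C1 C2 I T1 T2 M M1 M2 K :
  (0 < delta)%Z -> (0 < r2)%Z -> (r2 < r1)%Z -> (0 < r3)%Z ->
  Z.gcd r1 r2 = 1%Z -> (r1 ^ 2 + r2 ^ 2 = r3 ^ 2)%Z ->
  config C1 C2 (IZR (delta * r1 ^ 2)) (IZR (delta * r2 ^ 2)) I T1 T2 M M1 M2 K ->
  is_int (distp T1 I) -> is_int (distp C2 K) ->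
  (r3 * (r1 ^ 2 - r2 ^ 2) | delta)%Z.
Proof.
  intros Hd H2 H21 H3 Hg HpyZ Hc [z Hz] [z' Hz'].
  apply config_lengths in Hc as (_ & _ & _ & LT1I & _ & _ & _ & _ & _ & _ & _ & _ & LC2K & _).
  pose proof (f_equal IZR HpyZ) as Hpy.
  apply IZR_lt in Hd, H2, H21, H3.
  push_IZR.
  set (a := IZR r1) in *. set (b := IZR r2) in *. set (c := IZR r3) in *.
  set (d := IZR delta) in *.
  assert (HD : 0 < a ^ 2 - b ^ 2) by nra.
  replace (d * a ^ 2 + d * b ^ 2) with (d * c ^ 2) in * by (rewrite <- Hpy; ring).
  replace (d * a ^ 2 - d * b ^ 2) with (d * (a ^ 2 - b ^ 2)) in * by ring.
  assert (VT1I : distp T1 I = 2 * d * a ^ 2 * b / c).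
  { rewrite LT1I. apply sqrt_square.
    - apply Rmult_le_pos; [repeat (apply Rmult_le_pos || apply pow_le) |]; try lra.
      apply Rlt_le, Rinv_0_lt_compat. lra.
    - field. lra. }
  assert (VC2K : distp C2 K = d * b ^ 2 * c ^ 2 / (a ^ 2 - b ^ 2)).
  { rewrite LC2K. apply sqrt_square.
    - apply Rmult_le_pos; [repeat (apply Rmult_le_pos || apply pow_le) |]; try lra.
      apply Rlt_le, Rinv_0_lt_compat. lra.
    - field. lra. }
  apply (primitive_triple_divisibility r1 r2 r3 Hg);
    [exact HpyZ | exists z | exists z']; apply eq_IZR; push_IZR; fold a b c d.
  - rewrite <- Hz, VT1I. field. lra.
  - rewrite <- Hz', VC2K. field. lra.
Qed.

Theorem mainTheorem4 :
  forall (delta r1 r2 r3 : Z) (C1 C2 I T1 T2 M M1 M2 K : point),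
    (0 < delta)%Z -> (0 < r1)%Z -> (0 < r2)%Z -> (0 < r3)%Z ->
    Z.gcd r1 r2 = 1%Z -> (r2 < r1)%Z ->
    (r1 ^ 2 + r2 ^ 2 = r3 ^ 2)%Z ->
    config C1 C2 (IZR (delta * r1 ^ 2)) (IZR (delta * r2 ^ 2)) I T1 T2 M M1 M2 K ->
    ((is_int (distp T1 T2) /\ is_int (distp C1 M) /\ is_int (distp C2 M) /\
      is_int (distp T1 I) /\ is_int (distp T2 I) /\ is_int (distp C1 M1) /\
      is_int (distp C2 M2) /\ is_int (distp M1 M) /\ is_int (distp M2 M) /\
      is_int (distp I M) /\ is_int (distp C2 K) /\ is_int (distp T2 K) /\
      is_int (distp C1 K) /\ is_int (distp T1 K))
     <-> (r3 * (r1 ^ 2 - r2 ^ 2) | delta)%Z)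
    /\
    (forall t : Z, delta = (t * r3 * (r1 ^ 2 - r2 ^ 2))%Z ->
      (0 < t)%Z /\
      IZR (delta * r1 ^ 2) = IZR (t * r3 * r1 ^ 2 * (r1 ^ 2 - r2 ^ 2)) /\
      IZR (delta * r2 ^ 2) = IZR (t * r3 * r2 ^ 2 * (r1 ^ 2 - r2 ^ 2)) /\
      distp T1 T2 = IZR (2 * t * r1 * r2 * r3 * (r1 ^ 2 - r2 ^ 2)) /\
      distp C1 M = IZR (t * r1 * r3 ^ 2 * (r1 ^ 2 - r2 ^ 2)) /\
      distp C2 M = IZR (t * r2 * r3 ^ 2 * (r1 ^ 2 - r2 ^ 2)) /\
      distp T1 I = IZR (2 * t * r2 * r1 ^ 2 * (r1 ^ 2 - r2 ^ 2)) /\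
      distp T2 I = IZR (2 * t * r1 * r2 ^ 2 * (r1 ^ 2 - r2 ^ 2)) /\
      distp C1 M1 = IZR (t * r1 ^ 3 * (r1 ^ 2 - r2 ^ 2)) /\
      distp C2 M2 = IZR (t * r2 ^ 3 * (r1 ^ 2 - r2 ^ 2)) /\
      distp M1 M = IZR (t * r1 * r2 ^ 2 * (r1 ^ 2 - r2 ^ 2)) /\
      distp M2 M = IZR (t * r2 * r1 ^ 2 * (r1 ^ 2 - r2 ^ 2)) /\
      distp I M = IZR (t * r1 * r2 * r3 * (r1 ^ 2 - r2 ^ 2)) /\
      distp T1 M = IZR (t * r1 * r2 * r3 * (r1 ^ 2 - r2 ^ 2)) /\
      distp T2 M = IZR (t * r1 * r2 * r3 * (r1 ^ 2 - r2 ^ 2)) /\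
      distp C2 K = IZR (t * r2 ^ 2 * r3 ^ 3) /\
      distp T2 K = IZR (2 * t * r1 * r3 * r2 ^ 3) /\
      distp C1 K = IZR (t * r1 ^ 2 * r3 ^ 3) /\
      distp T1 K = IZR (2 * t * r2 * r3 * r1 ^ 3) /\
      (* the sixteen right triangles have integer side lengths *)
      (is_int (distp C1 T1) /\ is_int (distp T1 M1) /\ is_int (distp M1 C1)) /\
      (is_int (distp C1 I) /\ is_int (distp I M1) /\ is_int (distp M1 C1)) /\
      (is_int (distp C2 T2) /\ is_int (distp T2 M2) /\ is_int (distp M2 C2)) /\
      (is_int (distp C2 I) /\ is_int (distp I M2) /\ is_int (distp M2 C2)) /\
      (is_int (distp T1 M1) /\ is_int (distp M1 M) /\ is_int (distp M T1)) /\
      (is_int (distp M M1) /\ is_int (distp M1 I) /\ is_int (distp I M)) /\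
      (is_int (distp I M2) /\ is_int (distp M2 M) /\ is_int (distp M I)) /\
      (is_int (distp M M2) /\ is_int (distp M2 T2) /\ is_int (distp T2 M)) /\
      (is_int (distp C1 T1) /\ is_int (distp T1 M) /\ is_int (distp M C1)) /\
      (is_int (distp C1 I) /\ is_int (distp I M) /\ is_int (distp M C1)) /\
      (is_int (distp C2 T2) /\ is_int (distp T2 M) /\ is_int (distp M C2)) /\
      (is_int (distp C2 I) /\ is_int (distp I M) /\ is_int (distp M C2)) /\
      (is_int (distp C1 M) /\ is_int (distp M C2) /\ is_int (distp C2 C1)) /\
      (is_int (distp T1 I) /\ is_int (distp I T2) /\ is_int (distp T2 T1)) /\
      (is_int (distp C2 T2) /\ is_int (distp T2 K) /\ is_int (distp K C2)) /\
      (is_int (distp C1 T1) /\ is_int (distp T1 K) /\ is_int (distp K C1))).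
Proof.
  intros delta r1 r2 r3 C1 C2 I T1 T2 M M1 M2 K Hd _ H2 H3 Hg H21 Hpy Hc.
  assert (Hm : (0 < r3 * (r1 ^ 2 - r2 ^ 2))%Z)
    by (apply Z.mul_pos_pos; [lia | rewrite !Z.pow_2_r; nia]).
  split; [split |].
  - intros (_ & _ & _ & iT1I & _ & _ & _ & _ & _ & _ & iC2K & _).
    exact (integral_lengths_force_divisibility _ _ _ _ _ _ _ _ _ _ _ _ _
             Hd H2 H21 H3 Hg Hpy Hc iT1I iC2K).
  - intros [t Ht].
    assert (Htpos : (0 < t)%Z) by (apply (Z.mul_pos_cancel_r _ _ Hm); lia).
    rewrite Ht, Z.mul_assoc in Hc.
    destruct (divisible_case_lengths _ _ _ _ _ _ _ _ _ _ _ _ _ Htpos H2 H21 H3 Hpy Hc)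
      as (L1 & L2 & L3 & L4 & L5 & L6 & L7 & L8 & L9 & L10 & _ & _ & L11 & L12 & L13 & L14 & _).
    repeat split; eexists; eassumption.
  (* the explicit lengths; the sides of the sixteen triangles are among them or
     are the integer radii R1, R2 and the centre distance R1 + R2 *)
  - intros t ->.
    assert (Htpos : (0 < t)%Z)
      by (rewrite <- Z.mul_assoc in Hd; apply (Z.mul_pos_cancel_r _ _ Hm); lia).
    pose proof Hc as (_ & _ & EC1C2 & EC1I & EIC2 & EC1T1 & EC2T2 & _).
    rewrite <- plus_IZR in EC1C2.
    pose proof (divisible_case_lengths _ _ _ _ _ _ _ _ _ _ _ _ _ Htpos H2 H21 H3 Hpy Hc) as L.
    decompose [and] L. clear L.
    repeat split;
      solve [ assumption | f_equal; ring
            | eexists; eassumption | rewrite distp_sym; eexists; eassumption ].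
Qed.
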